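(* Let $G$ be a Tanner graph and $S$ a stopping set in $G$, and let $t_S$ denote the largest component that an irreducible lift-realizable pseudocodeword of $G$ with support $S$ may have. If $S$ is a minimal stopping set and does not have property $\Theta$, then every pseudocodeword with support $S$ has maximal component 1 or 2; that is, $t_S=1$ or $t_S=2$.
   Context: A Tanner graph $G$ is a finite bipartite graph with variable nodes $v_1,\dots,v_n$ and check nodes; its code consists of all $x\in\{0,1\}^n$ with every check node having an even number of neighbours $v_i$ with $x_i=1$. A degree-$\ell$ lift replaces each node by $\ell$ copies and each edge by a perfect matching between copy-sets; a lift-realizable pseudocodeword $p\in\mathbb{Z}_{\ge0}^n$ is obtained from a codeword of the code of a finite lift by letting $p_i$ be the number of copies of $v_i$ assigned 1; its support is $\{v_i:p_i\ne0\}$; it is irreducible if it is not a sum of two or more nonzero codewords/pseudocodewords. A stopping set is a nonempty set $S$ of variable nodes such that every check node adjacent to $S$ is adjacent to at least two nodes of $S$; it is minimal if it contains no strictly smaller nonempty stopping set. $G_{|_S}$ is the subgraph induced by $S$ and its neighbouring check nodes. $S$ has property $\Theta$ if it contains a pair of variable nodes not joined by any path in $G_{|_S}$ passing only through check nodes of degree two. *)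

From mathcomp Require Import all_boot fingroup perm.
Set Implicit Arguments. Unset Strict Implicit. Unset Printing Implicit Defensive.

(* A Tanner graph: variable nodes V, check nodes C (finite types), and the
   (simple) bipartite adjacency relation adj v c. *)

(* A degree-l lift: for each edge (v,c) a permutation perms v c of 'I_l;
   copy (v,i) is joined to copy (c, perms v c i) iff adj v c. *)
Definition lift_codeword (V C : finType) (adj : V -> C -> bool) (l : nat)
  (perms : V -> C -> {perm 'I_l}) (x : V -> 'I_l -> bool) : Prop :=
  forall (c : C) (j : 'I_l),
    ~~ odd #|[set vi : V * 'I_l | [&& adj vi.1 c, perms vi.1 c vi.2 == j & x vi.1 vi.2]]|.

Definition lift_realizable (V C : finType) (adj : V -> C -> bool) (p : V -> nat) : Prop :=
  exists (l : nat) (perms : V -> C -> {perm 'I_l}) (x : V -> 'I_l -> bool),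
    0 < l /\ lift_codeword adj perms x /\ forall v, p v = #|[set i : 'I_l | x v i]|.

Definition nonzero_vec (V : finType) (p : V -> nat) : Prop := exists v, p v <> 0.

Definition irreducible_pcw (V C : finType) (adj : V -> C -> bool) (p : V -> nat) : Prop :=
  ~ exists (k : nat) (qs : 'I_k -> V -> nat),
      2 <= k /\ (forall i, nonzero_vec (qs i)) /\ (forall i, lift_realizable adj (qs i)) /\
      (forall v, p v = \sum_(i < k) qs i v).

Definition support (V : finType) (p : V -> nat) : {set V} := [set v | p v != 0].

Definition nbS (V C : finType) (adj : V -> C -> bool) (S : {set V}) (c : C) : nat :=
  #|[set v in S | adj v c]|.

Definition stopping_set (V C : finType) (adj : V -> C -> bool) (S : {set V}) : Prop :=
  S != set0 /\ forall c : C, 0 < nbS adj S c -> 2 <= nbS adj S c.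

Definition minimal_stopping_set (V C : finType) (adj : V -> C -> bool) (S : {set V}) : Prop :=
  stopping_set adj S /\ forall S' : {set V}, S' \proper S -> ~ stopping_set adj S'.

Definition deg2_step (V C : finType) (adj : V -> C -> bool) (S : {set V}) : rel V :=
  fun u w => [&& u \in S, w \in S &
     [exists c : C, [&& adj u c, adj w c & nbS adj S c == 2]]].

Definition property_Theta (V C : finType) (adj : V -> C -> bool) (S : {set V}) : Prop :=
  exists u w, [/\ u \in S, w \in S & ~~ connect (deg2_step adj S) u w].

Definition is_tS (V C : finType) (adj : V -> C -> bool) (S : {set V}) (t : nat) : Prop :=
  (exists p : V -> nat, [/\ lift_realizable adj p, irreducible_pcw adj p,
        support p = S & \max_(v : V) p v = t]) /\
  (forall p : V -> nat, lift_realizable adj p -> irreducible_pcw adj p ->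
        support p = S -> forall v, p v <= t).

From Pilot Require Import Defs.
From mathcomp Require Import all_boot fingroup perm zify.
Set Implicit Arguments. Unset Strict Implicit. Unset Printing Implicit Defensive.

(* Through a
   check node with exactly two neighbours in S the 1-copies of these two
   neighbours are matched, so without property Theta such a pseudocodeword is
   constant, say m, on S; if some check has an odd number of neighbours in S,
   parity forces m to be even.  Conversely the indicator of S is a codeword when
   every check has even S-degree, and twice the indicator of any stopping set is
   realized in a degree-3 lift.  The smallest admissible multiple t of the
   indicator is then irreducible (by minimality every summand has support S, hence
   is at least t on S), while every larger multiple k * t is a sum of k copies of
   it. *)

Lemma card_set_sum (T : finType) (P : pred T) : #|[set i | P i]| = \sum_i P i.
Proof.
by rewrite -sum1dep_card big_mkcond; apply: eq_bigr => i _; case: (P i).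
Qed.

Lemma card_perm_preim l (s : {perm 'I_l}) (P : pred 'I_l) :
  #|[set j | P (s^-1%g j)]| = #|[set i | P i]|.
Proof.
rewrite -[RHS](card_preimset _ (f := (s^-1)%g)); last exact: perm_inj.
by apply: eq_card => j; rewrite !inE.
Qed.

Lemma tperm_eqL (T : finType) (x y z : T) : (tperm x y z == x) = (z == y).
Proof. by rewrite -[X in _ == X](tpermR x y) (inj_eq (@perm_inj _ _)). Qed.

Section TannerGraph.
Variables (V C : finType) (adj : V -> C -> bool).

Lemma lift_codewordE l (perms : V -> C -> {perm 'I_l}) (x : V -> 'I_l -> bool) :
  lift_codeword adj perms x <->
  (forall c j, ~~ odd #|[set v | adj v c && x v ((perms v c)^-1%g j)]|).
Proof.
suff card_copy c j :
    #|[set vi : V * 'I_l | [&& adj vi.1 c, perms vi.1 c vi.2 == j & x vi.1 vi.2]]|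
    = #|[set v | adj v c && x v ((perms v c)^-1%g j)]|.
  by split=> Hx c j; [rewrite -card_copy | rewrite card_copy]; apply: Hx.
rewrite -[RHS](card_imset _ (f := fun v => (v, (perms v c)^-1%g j))); last by move=> a b [].
apply: eq_card => -[v i]; rewrite inE /=; apply/idP/imsetP.
- by case/and3P=> vc /eqP <- xvi; exists v; rewrite ?inE permK ?vc.
- by case=> w; rewrite inE => /andP[wc xw] [-> ->]; rewrite wc permKV eqxx.
Qed.

Lemma lift_realizable_check_sum_even (p : V -> nat) (c : C) :
  lift_realizable adj p -> ~~ odd (\sum_(v | adj v c) p v).
Proof.
case=> l [perms [x [_ [/lift_codewordE Hx Hp]]]].
have row_sum v : p v = \sum_j x v ((perms v c)^-1%g j).
  by rewrite Hp -(card_perm_preim (perms v c)) card_set_sum.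
have col_sum j : \sum_(v | adj v c) x v ((perms v c)^-1%g j)
    = #|[set v | adj v c && x v ((perms v c)^-1%g j)]|.
  by rewrite card_set_sum big_mkcond; apply: eq_bigr => v _; case: (adj v c).
rewrite (eq_bigr _ (fun v _ => row_sum v)) exchange_big /=.
apply: (big_ind (fun n => ~~ odd n)) => // [a b|j _].
  by rewrite oddD => /negPf -> /negPf ->.
by rewrite col_sum; apply: Hx.
Qed.

Lemma lift_realizable_deg2_eq (S : {set V}) (p : V -> nat) (u w : V) :
  lift_realizable adj p -> Defs.support p \subset S -> deg2_step adj S u w -> p u = p w.
Proof.
case=> l [perms [x [_ [/lift_codewordE Hx Hp]]]] suppS.
case/and3P=> uS wS /existsP[c /and3P[uc wc /eqP nbS2]].
have xS v i : x v i -> v \in S.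
  move=> xvi; apply: (subsetP suppS); rewrite inE Hp -lt0n card_gt0.
  by apply/set0Pn; exists i; rewrite inE.
(* a check copy seeing exactly one 1 among its two S-neighbours would be odd *)
have partner a b j : a \in S -> b \in S -> adj a c -> adj b c -> a != b ->
    x a ((perms a c)^-1%g j) -> x b ((perms b c)^-1%g j).
  move=> aS bS ac bc ab xa; apply: contraT => xb.
  set B := [set v | adj v c && x v ((perms v c)^-1%g j)].
  have BSc : B \proper [set v in S | adj v c].
    apply/properP; split; last by exists b; rewrite !inE ?bS ?bc ?(negbTE xb).
    by apply/subsetP => v; rewrite !inE => /andP[vc /xS ->].
  have B1 : #|B| = 1.
    apply/eqP; rewrite eqn_leq -ltnS -nbS2 (proper_card BSc) card_gt0.
    by apply/set0Pn; exists a; rewrite inE ac xa.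
  by have := Hx c j; rewrite -/B B1.
have [-> //|uw] := eqVneq u w.
rewrite !Hp -(card_perm_preim (perms u c) (x u)) -(card_perm_preim (perms w c) (x w)).
by apply: eq_card => j; rewrite !inE; apply/idP/idP; apply: partner; rewrite // eq_sym.
Qed.

Lemma lift_realizable_support_stopping (p : V -> nat) :
  lift_realizable adj p -> nonzero_vec p -> stopping_set adj (Defs.support p).
Proof.
move=> [l [perms [x [_ [/lift_codewordE Hx Hp]]]]] [v0 pv0]; split.
  by apply/set0Pn; exists v0; rewrite inE; apply/eqP.
have x_supp v i : x v i -> v \in Defs.support p.
  by move=> xvi; rewrite inE Hp -lt0n card_gt0; apply/set0Pn; exists i; rewrite inE.
move=> c; rewrite leq_eqVlt => /orP[/eqP one|//]; exfalso.
have [v] : exists v, v \in [set w in Defs.support p | adj w c].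
  by apply/set0Pn; rewrite -card_gt0 -/(nbS adj _ c) -one.
rewrite !inE Hp -lt0n card_gt0 => /andP[/set0Pn[i]]; rewrite inE => xvi vc.
set B := [set w | adj w c && x w ((perms w c)^-1%g (perms v c i))].
have BSc : B \subset [set w in Defs.support p | adj w c].
  by apply/subsetP => w; rewrite !inE => /andP[-> /x_supp]; rewrite inE => ->.
have B1 : #|B| = 1.
  apply/eqP; rewrite eqn_leq; apply/andP; split; first by rewrite one subset_leq_card.
  by rewrite card_gt0; apply/set0Pn; exists v; rewrite inE vc permK.
by have := Hx c (perms v c i); rewrite -/B B1.
Qed.

Lemma lift_realizable_const_on (S : {set V}) (p : V -> nat) :
  ~ property_Theta adj S -> lift_realizable adj p -> Defs.support p = S ->
  {in S &, forall u w, p u = p w}.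
Proof.
move=> noTheta Hp suppS u w uS wS.
have uw : connect (deg2_step adj S) u w.
  by apply/negPn/negP => nuw; apply: noTheta; exists u, w.
have level_closed : closed (deg2_step adj S) [pred v | p v == p u].
  move=> a b /(lift_realizable_deg2_eq Hp); rewrite suppS subxx => /(_ isT).
  by rewrite !inE => ->.
by have := closed_connect level_closed uw; rewrite !inE eqxx => /esym/eqP.
Qed.

Definition tS (S : {set V}) : nat := if [forall c, ~~ odd (nbS adj S c)] then 1 else 2.

Lemma tS_gt0 (S : {set V}) : 0 < tS S.
Proof. by rewrite /tS; case: ifP. Qed.

Definition scaled_ind (S : {set V}) (m : nat) (v : V) : nat := m * (v \in S).

Lemma scaled_indE (S : {set V}) m v : scaled_ind S m v = if v \in S then m else 0.
Proof. by rewrite /scaled_ind; case: (v \in S); rewrite ?muln1 ?muln0. Qed.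

Lemma check_sum_scaled_ind (S : {set V}) m c :
  \sum_(v | adj v c) scaled_ind S m v = m * nbS adj S c.
Proof.
rewrite -big_distrr /nbS card_set_sum big_mkcond /=; congr (_ * _).
by apply: eq_bigr => v _; case: (v \in S); case: (adj v c).
Qed.

Lemma support_scaled_ind (S : {set V}) m : 0 < m -> Defs.support (scaled_ind S m) = S.
Proof.
by move=> m_gt0; apply/setP => v; rewrite inE scaled_indE; case: (v \in S); rewrite -?lt0n.
Qed.

Lemma bigmax_scaled_ind (S : {set V}) m : S != set0 -> \max_v scaled_ind S m v = m.
Proof.
move=> /set0Pn[v0 v0S]; apply/eqP; rewrite eqn_leq; apply/andP; split.
  by apply/bigmax_leqP => v _; rewrite scaled_indE; case: (v \in S).
by have := leq_bigmax (F := scaled_ind S m) v0; rewrite scaled_indE v0S.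
Qed.

Lemma lift_realizable_scaled_ind (S : {set V}) (p : V -> nat) :
  ~ property_Theta adj S -> S != set0 -> lift_realizable adj p -> Defs.support p = S ->
  exists m, [/\ 0 < m, tS S %| m & p =1 scaled_ind S m].
Proof.
move=> noTheta /set0Pn[v0 v0S] Hp suppS.
have pE : p =1 scaled_ind S (p v0).
  move=> v; rewrite scaled_indE; case: ifPn => vS.
    exact: (lift_realizable_const_on noTheta Hp suppS vS v0S).
  by apply/eqP; move: vS; rewrite -suppS inE negbK.
exists (p v0); split => //; first by move: v0S; rewrite -suppS inE lt0n.
rewrite /tS; case: ifPn => // /forallPn[c]; rewrite negbK => odd_c.
have := lift_realizable_check_sum_even c Hp.
by rewrite (eq_bigr _ (fun v _ => pE v)) check_sum_scaled_ind oddM odd_c andbT dvdn2.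
Qed.

Lemma scaled_ind_realizable_even (S : {set V}) :
  [forall c, ~~ odd (nbS adj S c)] -> lift_realizable adj (scaled_ind S 1).
Proof.
move=> /forallP even_S.
exists 1, (fun _ _ => 1%g), (fun v _ => v \in S); split => //; split => [|v].
  apply/lift_codewordE => c j /=; rewrite (eq_card (B := [set v in S | adj v c])) ?even_S // => v.
  by rewrite !inE andbC.
rewrite scaled_indE; case: (v \in S).
  by rewrite -[LHS](card_ord 1); apply: eq_card => i; rewrite inE.
by apply/esym/eqP; rewrite cards_eq0; apply/eqP/setP => i; rewrite !inE.
Qed.

(* In the degree-3 lift realizing twice the indicator of S, copies 1 and 2 of
   every vertex of S are set.  At a check with an odd number of neighbours in S
   two of them, marked 1 and 2, have their edges lifted by the transpositions
   (0 1) and (0 2), the other edges by (0 0) = 1: then check copy 0 sees two 1s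
   and copies 1 and 2 each see all but one of the S-neighbours. *)
Definition odd_check_mark (S : {set V}) (c : C) (v : V) : nat :=
  let Sc := [set w in S | adj w c] in
  if odd #|Sc| then
    if [pick ab : V * V | [&& ab.1 \in Sc, ab.2 \in Sc & ab.1 != ab.2]] is Some (a, b)
    then (if v == a then 1 else if v == b then 2 else 0) else 0
  else 0.

Lemma odd_check_mark_le2 S c v : odd_check_mark S c v <= 2.
Proof.
rewrite /odd_check_mark; case: ifP => // _; case: pickP => // -[a b] _.
by case: ifP => // _; case: ifP.
Qed.

Lemma odd_check_mark_even S c v : ~~ odd (nbS adj S c) -> odd_check_mark S c v = 0.
Proof. by rewrite /odd_check_mark /nbS => /negPf ->. Qed.

Lemma odd_check_markP (S : {set V}) c :
  stopping_set adj S -> odd (nbS adj S c) ->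
  exists a b, [/\ a \in [set w in S | adj w c], b \in [set w in S | adj w c], a != b &
    forall v, odd_check_mark S c v = if v == a then 1 else if v == b then 2 else 0].
Proof.
move=> [_ Sstop] odd_c.
rewrite /odd_check_mark -/(nbS adj S c) odd_c.
case: pickP => [[a b] /and3P[aSc bSc ab]|none]; first by exists a, b.
have /card_gt1P[a [b [aSc bSc ab]]] : 1 < nbS adj S c.
  by apply: Sstop; rewrite lt0n; apply: contraTneq odd_c => ->.
by have := none (a, b); rewrite /= aSc bSc ab.
Qed.

Lemma card_unmarked_even (S : {set V}) c (j : 'I_3) :
  stopping_set adj S ->
  ~~ odd #|[set v in [set w in S | adj w c] | val j != odd_check_mark S c v]|.
Proof.
move=> Sstop; set Sc := [set w in S | adj w c].
have [odd_c|even_c] := boolP (odd (nbS adj S c)); last first.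
  have [j0|jn0] := eqVneq (val j) 0.
    rewrite (eq_card (B := set0)) ?cards0 // => v.
    by rewrite !inE odd_check_mark_even // j0 eqxx andbF.
  rewrite (eq_card (B := Sc)) // => v.
  by rewrite !inE odd_check_mark_even // jn0 andbT.
have [a [b [aSc bSc ab markE]]] := odd_check_markP Sstop odd_c.
have card_minus1 z : z \in Sc -> ~~ odd #|Sc :\ z|.
  by move=> zSc; move: odd_c; rewrite /nbS -/Sc (cardsD1 z) zSc.
move: aSc bSc; rewrite !inE => /andP[aS ac] /andP[bS bc].
case: j => [[|[|[|//]]] j_lt] /=;
  [rewrite (eq_card (B := [set a; b])) ?cards2 ?ab //
  |rewrite (eq_card (B := Sc :\ a)) ?card_minus1 ?inE ?aS ?ac //
  |rewrite (eq_card (B := Sc :\ b)) ?card_minus1 ?inE ?bS ?bc //] => v;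
  rewrite !inE markE; case: (eqVneq v a) => [->|_]; try case: (eqVneq v b) => [->|_];
  by rewrite ?aS ?ac ?bS ?bc ?(negbTE ab) ?andbF ?andbT.
Qed.

Lemma scaled_ind_realizable_stopping (S : {set V}) :
  stopping_set adj S -> lift_realizable adj (scaled_ind S 2).
Proof.
move=> Sstop.
exists 3, (fun v c => tperm ord0 (inord (odd_check_mark S c v))),
  (fun v i => (v \in S) && (i != ord0)); split => //; split => [|v].
  apply/lift_codewordE => c j /=.
  set unmarked := [set v in [set w in S | adj w c] | val j != odd_check_mark S c v].
  rewrite (eq_card (B := unmarked)) ?card_unmarked_even // => v.
  rewrite !inE tpermV tperm_eqL -val_eqE /=.
  by rewrite inordK ?ltnS ?odd_check_mark_le2 // andbA [adj v c && _]andbC.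
rewrite scaled_indE; case: (v \in S).
  by rewrite (eq_card (B := [set~ ord0])) ?cardsC1 ?card_ord // => i; rewrite !inE.
by apply/esym/eqP; rewrite cards_eq0; apply/eqP/setP => i; rewrite !inE.
Qed.

Lemma scaled_ind_tS_realizable (S : {set V}) :
  stopping_set adj S -> lift_realizable adj (scaled_ind S (tS S)).
Proof.
rewrite /tS; case: ifP => [even_S _|_]; first exact: scaled_ind_realizable_even.
exact: scaled_ind_realizable_stopping.
Qed.

Lemma minimal_support_eq (S : {set V}) (q : V -> nat) :
  minimal_stopping_set adj S -> lift_realizable adj q -> nonzero_vec q ->
  Defs.support q \subset S -> Defs.support q = S.
Proof.
move=> [_ Smin] Hq nz_q sub_S; apply/eqP; rewrite eqEproper sub_S /=.
by apply/negP => /Smin; apply; exact: lift_realizable_support_stopping.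
Qed.

Lemma multiple_not_irreducible (p q : V -> nat) (k : nat) :
  2 <= k -> lift_realizable adj q -> nonzero_vec q -> (forall v, p v = k * q v) ->
  ~ irreducible_pcw adj p.
Proof.
move=> k_ge2 Hq nz_q pE; apply; exists k, (fun _ => q).
split=> //; split=> [_|] //; split=> [_|v] //.
by rewrite pE sum_nat_const card_ord.
Qed.

Lemma scaled_ind_tS_irreducible (S : {set V}) :
  minimal_stopping_set adj S -> ~ property_Theta adj S ->
  irreducible_pcw adj (scaled_ind S (tS S)).
Proof.
move=> Smin noTheta [k [qs [k_ge2 [nz_qs [Hqs sumE]]]]].
have [[SN _] _] := Smin; have [v0 v0S] := set0Pn _ SN.
have supp_qs i : Defs.support (qs i) = S.
  apply: minimal_support_eq => //; apply/subsetP => v; rewrite inE.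
  apply: contraNT => vS; have : qs i v <= scaled_ind S (tS S) v.
    by rewrite sumE (bigD1 i) //= leq_addr.
  by rewrite scaled_indE (negbTE vS) leqn0.
have qs_ge i : tS S <= qs i v0.
  have [m [m_gt0 tS_m qsE]] := lift_realizable_scaled_ind noTheta SN (Hqs i) (supp_qs i).
  by rewrite qsE scaled_indE v0S dvdn_leq.
have : \sum_(i < k) tS S <= \sum_(i < k) qs i v0 by apply: leq_sum => i _.
rewrite -sumE scaled_indE v0S sum_nat_const card_ord; move: (tS_gt0 S); nia.
Qed.

Lemma realizable_irreducible_le_tS (S : {set V}) :
  ~ property_Theta adj S -> stopping_set adj S -> forall p : V -> nat,
  lift_realizable adj p -> irreducible_pcw adj p -> Defs.support p = S ->
  forall v, p v <= tS S.
Proof.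
move=> noTheta Sstop p Hp irr_p suppS v.
have [m [_ /dvdnP[k mE] pE]] := lift_realizable_scaled_ind noTheta Sstop.1 Hp suppS.
suff m_le : m <= tS S by rewrite pE scaled_indE; case: (v \in S).
rewrite leqNgt; apply/negP => tS_lt_m.
have [v0 v0S] := set0Pn _ Sstop.1.
apply: (multiple_not_irreducible (k := k) _ (scaled_ind_tS_realizable Sstop) _ _ irr_p).
- by move: tS_lt_m (tS_gt0 S); rewrite mE; nia.
- by exists v0; rewrite scaled_indE v0S; apply/eqP; rewrite -lt0n tS_gt0.
- by move=> u; rewrite pE !scaled_indE mE; case: (u \in S); rewrite ?muln0.
Qed.

End TannerGraph.

Theorem lemma6 (V C : finType) (adj : V -> C -> bool) (S : {set V}) :
  minimal_stopping_set adj S -> ~ property_Theta adj S ->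
  exists t : nat, is_tS adj S t /\ (t = 1 \/ t = 2).
Proof.
move=> Smin noTheta; have [Sstop _] := Smin.
exists (tS adj S); split; last by rewrite /tS; case: ifP; [left|right].
split; last exact: realizable_irreducible_le_tS noTheta Sstop.
exists (scaled_ind S (tS adj S)); split.
- exact: scaled_ind_tS_realizable.
- exact: scaled_ind_tS_irreducible.
- exact/support_scaled_ind/tS_gt0.
- exact/bigmax_scaled_ind/Sstop.1.
Qed.
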